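(* Let $k\in\mathbb{R}_{\ge0}$, $(A,B,C)$ a $k$-initial triple, $(a,b,c)$ a $0$-initial triple, and $\mathbf{w}=[w_1,w_2,\dots]$ an infinite reduced sequence in which each of $1,2,3$ appears infinitely many times. For $j\ge0$ let $(X_j,Y_j,Z_j)=\mathcal{M}_k^{\mathbf{w}_j}(A,B,C)$, $(x_j,y_j,z_j)=\mathcal{M}^{\mathbf{w}_j}(a,b,c)$ and $(l_j,m_j,n_j)=(X_j/x_j,Y_j/y_j,Z_j/z_j)$. Then the sequence $\{\max(l_j,m_j,n_j)\}_{j\ge1}$ is bounded above.
   Context: For $k\in\mathbb{R}_{\ge0}$: $\mathcal{M}_{1;k}(X,Y,Z)=(k+Y+Z,Y,Z)$, $\mathcal{M}_{2;k}(X,Y,Z)=(X,k+X+Z,Z)$, $\mathcal{M}_{3;k}(X,Y,Z)=(X,Y,k+X+Y)$ on $\mathbb{R}_+^3$, $\mathcal{M}_i=\mathcal{M}_{i;0}$. A $k$-initial triple is $(A,B,C)\in\mathbb{R}_+^3$ with $A\ne B+C+k$, $B\ne A+C+k$, $C\ne A+B+k$. A sequence with entries in $\{1,2,3\}$ is reduced if consecutive entries differ; $\mathbf{w}_j=[w_1,\dots,w_j]$ ($\mathbf{w}_0$ empty), $\mathcal{M}_k^{\mathbf{w}_j}=\mathcal{M}_{w_j;k}\circ\cdots\circ\mathcal{M}_{w_1;k}$, $\mathcal{M}^{\mathbf{w}_j}=\mathcal{M}_0^{\mathbf{w}_j}$. *)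

From Stdlib Require Import Reals.
Open Scope R_scope.

(* The maps M_{i;k} on triples. Indices other than 1,2 are treated as 3;
   the statement only uses sequences with entries in {1,2,3}. *)
Definition Mk (k : R) (i : nat) (t : R * R * R) : R * R * R :=
  let '(X, Y, Z) := t in
  match i with
  | 1%nat => (k + Y + Z, Y, Z)
  | 2%nat => (X, k + X + Z, Z)
  | _ => (X, Y, k + X + Y)
  end.

Definition pos_triple (t : R * R * R) : Prop :=
  let '(X, Y, Z) := t in 0 < X /\ 0 < Y /\ 0 < Z.

Definition k_initial (k : R) (t : R * R * R) : Prop :=
  pos_triple t /\
  let '(A, B, C) := t in
  A <> B + C + k /\ B <> A + C + k /\ C <> A + B + k.

(* w : nat -> nat, with w n the entry w_{n+1}. *)
Definition reduced_seq (w : nat -> nat) : Prop :=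
  (forall n, (w n = 1 \/ w n = 2 \/ w n = 3)%nat) /\
  (forall n, w n <> w (S n)).

Definition appears_inf_often (w : nat -> nat) (i : nat) : Prop :=
  forall N, exists n, (N <= n)%nat /\ w n = i.

Fixpoint Mk_iter (k : R) (w : nat -> nat) (j : nat) (t : R * R * R) : R * R * R :=
  match j with
  | O => t
  | S j' => Mk k (w j') (Mk_iter k w j' t)
  end.

Definition max3 (a b c : R) : R := Rmax a (Rmax b c).

From Stdlib Require Import Reals Lra.
Open Scope R_scope.

(** The invariant "positive, and [X + k <= U x] in every coordinate" is
    preserved by each step: [M_{1;k}] replaces [X] by [k + Y + Z] and [x] by
    [y + z], and [(k + Y + Z) + k = (Y + k) + (Z + k) <= U (y + z)].
    Taking [U = max ((A + k)/a, (B + k)/b, (C + k)/c)] and using [k >= 0]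
    gives [X_j / x_j <= U]. *)

Lemma Rdiv_le_iff (P p U : R) : 0 < p -> P / p <= U <-> P <= U * p.
Proof.
  intro Hp; split; intro H.
  - replace P with (P / p * p) by (field; lra).
    apply Rmult_le_compat_r; lra.
  - apply Rmult_le_reg_r with p; [exact Hp|].
    replace (P / p * p) with P by (field; lra); exact H.
Qed.

Lemma max3_lub (a b c M : R) : a <= M -> b <= M -> c <= M -> max3 a b c <= M.
Proof. intros; unfold max3; repeat apply Rmax_lub; assumption. Qed.

Lemma max3_ub (a b c : R) : a <= max3 a b c /\ b <= max3 a b c /\ c <= max3 a b c.
Proof.
  unfold max3; pose proof (Rmax_l b c); pose proof (Rmax_r b c).
  pose proof (Rmax_l a (Rmax b c)); pose proof (Rmax_r a (Rmax b c)); lra.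
Qed.

Definition ratio_bounded (k U : R) (t s : R * R * R) : Prop :=
  let '(X, Y, Z) := t in
  let '(x, y, z) := s in
  pos_triple s /\ X + k <= U * x /\ Y + k <= U * y /\ Z + k <= U * z.

Lemma ratio_bounded_Mk (k U : R) (i : nat) (t s : R * R * R) :
  ratio_bounded k U t s -> ratio_bounded k U (Mk k i t) (Mk 0 i s).
Proof.
  destruct t as [[X Y] Z], s as [[x y] z]; unfold ratio_bounded, pos_triple, Mk.
  intros [(Hx & Hy & Hz) (HX & HY & HZ)].
  destruct i as [|[|[|]]]; repeat split; nra.
Qed.

Lemma ratio_bounded_Mk_iter (k U : R) (w : nat -> nat) (j : nat) (t s : R * R * R) :
  ratio_bounded k U t s -> ratio_bounded k U (Mk_iter k w j t) (Mk_iter 0 w j s).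
Proof.
  intro H; induction j as [|j IH]; simpl; [exact H | exact (ratio_bounded_Mk _ _ _ _ _ IH)].
Qed.

Lemma ratio_bounded_init (k A B C a b c : R) :
  pos_triple (a, b, c) ->
  ratio_bounded k (max3 ((A + k) / a) ((B + k) / b) ((C + k) / c)) (A, B, C) (a, b, c).
Proof.
  intros (Ha & Hb & Hc); simpl.
  destruct (max3_ub ((A + k) / a) ((B + k) / b) ((C + k) / c)) as (HA & HB & HC).
  repeat split; try assumption; apply Rdiv_le_iff; assumption.
Qed.

Lemma max3_ratio_le (k U X Y Z x y z : R) :
  0 <= k -> ratio_bounded k U (X, Y, Z) (x, y, z) -> max3 (X / x) (Y / y) (Z / z) <= U.
Proof.
  intros Hk [(Hx & Hy & Hz) (HX & HY & HZ)].
  apply max3_lub; apply Rdiv_le_iff; lra.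
Qed.

Theorem proposition5p3 (k : R) (A B C a b c : R) (w : nat -> nat) :
  0 <= k ->
  k_initial k (A, B, C) ->
  k_initial 0 (a, b, c) ->
  reduced_seq w ->
  appears_inf_often w 1%nat ->
  appears_inf_often w 2%nat ->
  appears_inf_often w 3%nat ->
  exists U : R, forall j : nat, (1 <= j)%nat ->
    let '(X, Y, Z) := Mk_iter k w j (A, B, C) in
    let '(x, y, z) := Mk_iter 0 w j (a, b, c) in
    max3 (X / x) (Y / y) (Z / z) <= U.
Proof.
  intros Hk _ [Habc _] _ _ _ _.
  exists (max3 ((A + k) / a) ((B + k) / b) ((C + k) / c)); intros j _.
  pose proof (ratio_bounded_Mk_iter k _ w j _ _ (ratio_bounded_init k A B C a b c Habc)) as H.
  destruct (Mk_iter k w j (A, B, C)) as [[X Y] Z], (Mk_iter 0 w j (a, b, c)) as [[x y] z].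
  exact (max3_ratio_le _ _ _ _ _ _ _ _ Hk H).
Qed.
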